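(* Let $F:\mathbb{R}^p\to\mathbb{R}^p$ be single-valued with $\mathrm{zer}\,F\neq\emptyset$, $L$-Lipschitz continuous, and suppose there exist $x^\star\in\mathrm{zer}\,F$ and $\rho\ge0$ such that $\langle Fx,x-x^\star\rangle\ge-\rho\|Fx\|^2$ for all $x\in\mathrm{dom}\,F$. Let $\kappa_1,\kappa_2\ge0$, $\beta\in(0,1]$, $\eta>0$, and let $\{(x^k,y^k)\}$ be generated by: start from $x^0\in\mathrm{dom}\,F$, set $x^{-1}=y^{-1}:=x^0$, and for $k\ge0$ $$y^k:=x^k-\tfrac{\eta}{\beta}u^k,\qquad x^{k+1}:=x^k-\eta Fy^k,$$ where $u^k\in\mathbb{R}^p$ satisfies $\|Fx^k-u^k\|^2\le\kappa_1\|Fx^k-Fy^{k-1}\|^2+\kappa_2\|Fx^k-Fx^{k-1}\|^2$. For $\gamma>0$ and $r>0$ define $$\mathcal{P}_k:=\|x^k-x^\star\|^2+\tfrac{\kappa_1(1+r)L^2\eta^2}{r\gamma}\|x^k-y^{k-1}\|^2+\tfrac{\kappa_2(1+r)L^2\eta^2}{r\gamma}\|x^k-x^{k-1}\|^2.$$ Then for any $s>0$, $\mu\in[0,1]$ and $k\ge0$, $$\begin{aligned}\mathcal{P}_{k+1}\le{}&\mathcal{P}_k-\Big(\beta-\tfrac{(1+r)L^2\eta^2}{\gamma}-\tfrac{2\mu\rho(1+s)}{s\eta}\Big)\|y^k-x^k\|^2\\&-\Big(\beta-\gamma-\tfrac{\kappa_1(1+r)L^2\eta^2}{r\gamma}-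\tfrac{2\mu\rho(1+s)}{\eta}\Big)\|x^{k+1}-y^k\|^2\\&-\Big(1-\beta-\tfrac{\kappa_2(1+r)L^2\eta^2}{r\gamma}-\tfrac{2(1-\mu)\rho}{\eta}\Big)\|x^{k+1}-x^k\|^2.\end{aligned}$$
   Context: $\mathrm{zer}\,F:=\{x:Fx=0\}$. $F$ is $L$-Lipschitz if $\|Fx-Fy\|\le L\|x-y\|$ for all $x,y\in\mathrm{dom}\,F$. *)

From HB Require Import structures.
From mathcomp Require Import all_boot all_order all_algebra.
From mathcomp Require Import reals.
Set Implicit Arguments. Unset Strict Implicit. Unset Printing Implicit Defensive.
Import Order.TTheory GRing.Theory Num.Theory.
Local Open Scope ring_scope.

Definition dotp (R : realType) (p : nat) (x y : 'rV[R]_p) : R :=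
  \sum_(i < p) x 0 i * y 0 i.

Definition nrm2 (R : realType) (p : nat) (x : 'rV[R]_p) : R := dotp x x.
Definition nrm (R : realType) (p : nat) (x : 'rV[R]_p) : R := Num.sqrt (nrm2 x).

Definition zer (R : realType) (p : nat) (F : 'rV[R]_p -> 'rV[R]_p) : 'rV[R]_p -> Prop :=
  fun x => F x = 0.

(* F is L-Lipschitz on dom F = R^p *)
Definition Lipschitz (R : realType) (p : nat) (F : 'rV[R]_p -> 'rV[R]_p) (L : R) : Prop :=
  forall x y, nrm (F x - F y) <= L * nrm (x - y).

(* x^{k-1} with the convention x^{-1} := x^0 *)
Definition xprev (R : realType) (p : nat) (x : nat -> 'rV[R]_p) (k : nat) : 'rV[R]_p :=
  x k.-1.
(* y^{k-1} with the convention y^{-1} := x^0 *)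
Definition yprev (R : realType) (p : nat) (x y : nat -> 'rV[R]_p) (k : nat) : 'rV[R]_p :=
  if k is k'.+1 then y k' else x 0%N.

Definition Pk (R : realType) (p : nat) (x y : nat -> 'rV[R]_p) (xstar : 'rV[R]_p)
  (kappa1 kappa2 L eta gamma r : R) (k : nat) : R :=
  nrm2 (x k - xstar)
  + kappa1 * (1 + r) * L ^+ 2 * eta ^+ 2 / (r * gamma) * nrm2 (x k - yprev x y k)
  + kappa2 * (1 + r) * L ^+ 2 * eta ^+ 2 / (r * gamma) * nrm2 (x k - xprev x k).

From HB Require Import structures.
From mathcomp Require Import all_boot all_order all_algebra.
From mathcomp Require Import reals ring lra.
Import Order.TTheory GRing.Theory Num.Theory.
Local Open Scope ring_scope.

(* Write e := x^{k+1} - y^k and f := y^k - x^k, so that x^{k+1} - x^k = e + f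
   = -eta F y^k.  The three-point identity gives
     |x^{k+1} - x*|^2 = |x^k - x*|^2 + 2<x^{k+1} - x^k, y^k - x*> + |e|^2 - |f|^2,
   and the weak Minty condition at y^k bounds the middle term by
   (2 rho / eta) |e + f|^2; a fraction mu of it is split by Young's inequality
   with parameter s.  Since eta (u^k - F y^k) = e + (1 - beta) f, the remaining
   |e|^2 - |f|^2 equals -beta |f|^2 - beta |e|^2 - (1 - beta) |e + f|^2 plus
   2<e, eta (u^k - F y^k)>, which Young's inequality with parameter gamma bounds
   by gamma |e|^2 + (eta^2 / gamma) |F y^k - u^k|^2.  Finally
   |F y^k - u^k|^2 <= (1 + r) |F y^k - F x^k|^2 + (1 + 1/r) |F x^k - u^k|^2,
   and after the Lipschitz bound and the oracle condition the last summand is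
   exactly absorbed by the decrease of the two memory terms of P_k. *)

Section InnerProduct.
Context {R : realType} {p : nat}.
Implicit Types (a b c : 'rV[R]_p) (t : R).

Lemma dotpC a b : dotp a b = dotp b a.
Proof. by apply: eq_bigr => i _; rewrite mulrC. Qed.

Lemma dotpDl a b c : dotp (a + b) c = dotp a c + dotp b c.
Proof. by rewrite /dotp -big_split; apply: eq_bigr => i _; rewrite mxE mulrDl. Qed.

Lemma dotpZl t a b : dotp (t *: a) b = t * dotp a b.
Proof. by rewrite /dotp mulr_sumr; apply: eq_bigr => i _; rewrite mxE mulrA. Qed.

Lemma dotpNl a b : dotp (- a) b = - dotp a b.
Proof. by rewrite -scaleN1r dotpZl mulN1r. Qed.

Lemma dotpDr a b c : dotp a (b + c) = dotp a b + dotp a c.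
Proof. by rewrite dotpC dotpDl !(dotpC a). Qed.

Lemma dotpZr t a b : dotp a (t *: b) = t * dotp a b.
Proof. by rewrite dotpC dotpZl dotpC. Qed.

Lemma dotpNr a b : dotp a (- b) = - dotp a b.
Proof. by rewrite dotpC dotpNl dotpC. Qed.

Lemma nrm2_ge0 a : 0 <= nrm2 a.
Proof. by apply: sumr_ge0 => i _; rewrite -expr2 sqr_ge0. Qed.

Lemma nrm2Z t a : nrm2 (t *: a) = t ^+ 2 * nrm2 a.
Proof. by rewrite /nrm2 dotpZl dotpZr mulrA -expr2. Qed.

Lemma nrm2N a : nrm2 (- a) = nrm2 a.
Proof. by rewrite /nrm2 dotpNl dotpNr opprK. Qed.

Lemma nrm2D a b : nrm2 (a + b) = nrm2 a + 2 * dotp a b + nrm2 b.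
Proof. by rewrite /nrm2 dotpDl !dotpDr (dotpC b a); ring. Qed.

Lemma dotp_le_young t a b :
  0 < t -> 2 * dotp a b <= t * nrm2 a + t^-1 * nrm2 b.
Proof.
move=> t_gt0; rewrite -subr_ge0.
have -> : t * nrm2 a + t^-1 * nrm2 b - 2 * dotp a b = t^-1 * nrm2 (t *: a - b).
  by rewrite nrm2D nrm2Z nrm2N dotpNr dotpZl; field; rewrite gt_eqF.
by rewrite mulr_ge0 ?nrm2_ge0 // invr_ge0 ltW.
Qed.

Lemma nrm2D_le t a b :
  0 < t -> nrm2 (a + b) <= (1 + t) * nrm2 a + (1 + t) / t * nrm2 b.
Proof.
move=> t_gt0; have := dotp_le_young t a b t_gt0.
have -> : (1 + t) / t = 1 + t^-1 by field; rewrite gt_eqF.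
by rewrite nrm2D; lra.
Qed.

Lemma nrm2_three_point (x x' y z : 'rV[R]_p) :
  nrm2 (x' - z) = nrm2 (x - z) + 2 * dotp (x' - x) (y - z)
                  + nrm2 (x' - y) - nrm2 (y - x).
Proof.
have -> : x' - z = (x' - x) + (x - z) by rewrite subrKA.
have -> : y - z = (y - x) + (x - z) by rewrite subrKA.
have -> : x' - y = (x' - x) - (y - x) by rewrite opprB subrKA.
move: (x' - x) (y - x) (x - z) => d f a.
rewrite !nrm2D nrm2N dotpNr !dotpDr; ring.
Qed.

Lemma nrm2_lipschitz (F : 'rV[R]_p -> 'rV[R]_p) L a b :
  Lipschitz F L -> nrm2 (F a - F b) <= L ^+ 2 * nrm2 (a - b).
Proof.
move=> /(_ a b) lip; have nrm_ge0 : 0 <= nrm (F a - F b) := sqrtr_ge0 _.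
have := ler_pM nrm_ge0 nrm_ge0 lip lip.
by rewrite mulrACA -!expr2 /nrm !sqr_sqrtr // nrm2_ge0.
Qed.

End InnerProduct.

Lemma nrm2_oracle_error_le {R : realType} {p : nat} {F : 'rV[R]_p -> 'rV[R]_p}
    {L kappa1 kappa2 r : R} {x u a b : 'rV[R]_p} (y : 'rV[R]_p) :
  Lipschitz F L -> 0 < r -> 0 <= kappa1 -> 0 <= kappa2 ->
  nrm2 (F x - u) <= kappa1 * nrm2 (F x - F a) + kappa2 * nrm2 (F x - F b) ->
  nrm2 (F y - u)
  <= (1 + r) * L ^+ 2 * nrm2 (y - x)
     + (1 + r) / r * L ^+ 2 * (kappa1 * nrm2 (x - a) + kappa2 * nrm2 (x - b)).
Proof.
move=> lip r_gt0 kappa1_ge0 kappa2_ge0 oracle.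
have lip_a := ler_wpM2l kappa1_ge0 (nrm2_lipschitz F L x a lip).
have lip_b := ler_wpM2l kappa2_ge0 (nrm2_lipschitz F L x b lip).
have oracle_lip :
  nrm2 (F x - u) <= L ^+ 2 * (kappa1 * nrm2 (x - a) + kappa2 * nrm2 (x - b)) by lra.
have r1_ge0 : 0 <= 1 + r by rewrite addr_ge0 // ltW.
have := ler_wpM2l (divr_ge0 r1_ge0 (ltW r_gt0)) oracle_lip.
have := ler_wpM2l r1_ge0 (nrm2_lipschitz F L y x lip).
have := nrm2D_le r (F y - F x) (F x - u) r_gt0; rewrite subrKA.
lra.
Qed.

Section InexactStep.
Context {R : realType} {p : nat} {F : 'rV[R]_p -> 'rV[R]_p} {xstar : 'rV[R]_p}.
Context {rho beta eta : R}.
Hypotheses (rho_ge0 : 0 <= rho) (beta_gt0 : 0 < beta) (eta_gt0 : 0 < eta).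
Hypothesis weak_minty : forall z, dotp (F z) (z - xstar) >= - rho * nrm2 (F z).
Context {x u y x' : 'rV[R]_p}.
Hypotheses (def_y : y = x - (eta / beta) *: u) (def_x' : x' = x - eta *: F y).

Lemma dotp_weak_minty_step :
  2 * dotp (x' - x) (y - xstar) <= 2 * rho / eta * nrm2 (x' - x).
Proof.
have minty_eta := ler_wpM2l (ltW eta_gt0) (weak_minty y).
have -> : x' - x = - eta *: F y by rewrite def_x' addrAC subrr add0r scaleNr.
rewrite dotpZl nrm2Z.
have -> : 2 * rho / eta * ((- eta) ^+ 2 * nrm2 (F y)) = 2 * eta * (rho * nrm2 (F y)).
  by field; rewrite gt_eqF.
lra.
Qed.

Lemma scaled_oracle_residual : eta *: (u - F y) = (x' - y) + (1 - beta) *: (y - x).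
Proof.
rewrite def_x'; move: (F y) => v; rewrite def_y.
by apply/rowP => i; rewrite !mxE; field; rewrite gt_eqF.
Qed.

Lemma nrm2_step_le (gamma s mu : R) :
  0 < gamma -> 0 < s -> 0 <= mu ->
  nrm2 (x' - xstar)
  <= nrm2 (x - xstar)
     - (beta - 2 * mu * rho * (1 + s) / (s * eta)) * nrm2 (y - x)
     - (beta - gamma - 2 * mu * rho * (1 + s) / eta) * nrm2 (x' - y)
     - (1 - beta - 2 * (1 - mu) * rho / eta) * nrm2 (x' - x)
     + eta ^+ 2 / gamma * nrm2 (F y - u).
Proof.
move=> gamma_gt0 s_gt0 mu_ge0.
have three_point := nrm2_three_point x x' y xstar.
have minty := dotp_weak_minty_step.
have split_step := nrm2D_le s (x' - y) (y - x) s_gt0; rewrite subrKA in split_step.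
have weight_ge0 : 0 <= mu * rho / eta by rewrite divr_ge0 ?mulr_ge0 // ltW.
have split_mu := ler_wpM2l weight_ge0 split_step.
have expand_step := nrm2D (x' - y) (y - x); rewrite subrKA in expand_step.
have young := dotp_le_young gamma (x' - y) (eta *: (u - F y)) gamma_gt0.
rewrite nrm2Z scaled_oracle_residual -(opprB (F y) u) nrm2N dotpDr dotpZr in young.
rewrite -/(nrm2 (x' - y)) in young.
rewrite expand_step in minty split_mu *.
lra.
Qed.

End InexactStep.

Theorem lemma2 (R : realType) (p : nat) (F : 'rV[R]_p -> 'rV[R]_p) (L : R)
  (xstar : 'rV[R]_p) (rho kappa1 kappa2 beta eta : R)
  (x y u : nat -> 'rV[R]_p) :
  (exists z, zer F z) ->
  Lipschitz F L ->
  zer F xstar ->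
  0 <= rho ->
  (forall z, dotp (F z) (z - xstar) >= - rho * nrm2 (F z)) ->
  0 <= kappa1 -> 0 <= kappa2 ->
  0 < beta -> beta <= 1 ->
  0 < eta ->
  (forall k, y k = x k - (eta / beta) *: u k) ->
  (forall k, x k.+1 = x k - eta *: F (y k)) ->
  (forall k, nrm2 (F (x k) - u k)
             <= kappa1 * nrm2 (F (x k) - F (yprev x y k))
                + kappa2 * nrm2 (F (x k) - F (xprev x k))) ->
  forall (gamma r s mu : R), 0 < gamma -> 0 < r -> 0 < s -> 0 <= mu -> mu <= 1 ->
  forall k : nat,
    Pk x y xstar kappa1 kappa2 L eta gamma r k.+1
    <= Pk x y xstar kappa1 kappa2 L eta gamma r k
       - (beta - (1 + r) * L ^+ 2 * eta ^+ 2 / gamma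
               - 2 * mu * rho * (1 + s) / (s * eta)) * nrm2 (y k - x k)
       - (beta - gamma - kappa1 * (1 + r) * L ^+ 2 * eta ^+ 2 / (r * gamma)
               - 2 * mu * rho * (1 + s) / eta) * nrm2 (x k.+1 - y k)
       - (1 - beta - kappa2 * (1 + r) * L ^+ 2 * eta ^+ 2 / (r * gamma)
               - 2 * (1 - mu) * rho / eta) * nrm2 (x k.+1 - x k).
Proof.
(* Of x* only the weak Minty inequality is used. *)
move=> _ lip _ rho_ge0 weak_minty kappa1_ge0 kappa2_ge0 beta_gt0 _ eta_gt0
  def_y def_x oracle gamma r s mu gamma_gt0 r_gt0 s_gt0 mu_ge0 _ k.
have step := nrm2_step_le rho_ge0 beta_gt0 eta_gt0 weak_minty
  (def_y k) (def_x k) gamma s mu gamma_gt0 s_gt0 mu_ge0.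
have error := nrm2_oracle_error_le (y k) lip r_gt0 kappa1_ge0 kappa2_ge0 (oracle k).
have scale_ge0 : 0 <= eta ^+ 2 / gamma by rewrite divr_ge0 ?sqr_ge0 ?ltW.
have := ler_wpM2l scale_ge0 error.
rewrite /Pk.
have -> : yprev x y k.+1 = y k by [].
have -> : xprev x k.+1 = x k by [].
lra.
Qed.
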